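(* Consider the distributed detection model in the context and suppose $\alpha>\frac{1}{P_{0,1}+P_{1,0}}$ (so that $\pi_{1,1}<\pi_{1,0}$), with $0<\pi_{1,0},\pi_{1,1}<1$. Let $k=\sum_{i=1}^N u_i$ be the number of received ones. Then the MAP (error-probability-minimizing) fusion rule decides $H_0$ if $k>T'$ and $H_1$ if $k<T'$, where $$T'=\frac{\ln\left[\frac{P_1}{P_0}\left(\frac{1-\pi_{1,1}}{1-\pi_{1,0}}\right)^{N}\right]}{\ln\frac{\pi_{1,0}}{\pi_{1,1}}+\ln\frac{1-\pi_{1,1}}{1-\pi_{1,0}}}.$$
   Context: Binary hypothesis test between $H_0$ and $H_1$ with priors $P_0,P_1\in(0,1)$, $P_0+P_1=1$. There are $N$ sensors, each using the same fixed local threshold, so that conditionally on the hypothesis their local decisions $v_i\in\{0,1\}$ are i.i.d. with $P(v_i=1\mid H_1)=P_d$, $P(v_i=1\mid H_0)=P_f$, where $0<P_f<P_d<1$. Each sensor independently is Byzantine with probability $\alpha\in[0,1]$. Honest nodes send $u_i=v_i$; a Byzantine node sends $u_i=1$ with probability $P_{1,0}$ when $v_i=0$ and sends $u_i=0$ with probability $P_{0,1}$ when $v_i=1$. Hence conditionally on $H_j$ the $u_i$ are i.i.d. with $P(u_i=1\mid H_0)=\pi_{1,0}=\alpha(P_{1,0}(1-P_f)+(1-P_{0,1})P_f)+(1-\alpha)P_f$ and $P(u_i=1\mid H_1)=\pi_{1,1}=\alpha(P_{1,0}(1-P_d)+(1-P_{0,1})P_d)+(1-\alpha)P_d$. The fusion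 center knows $(\alpha,P_{1,0},P_{0,1})$ and the MAP rule decides $H_1$ when $P(\mathbf u\mid H_1)/P(\mathbf u\mid H_0)>P_0/P_1$ and $H_0$ when it is $<P_0/P_1$. *)

From Stdlib Require Import Reals List.
Import ListNotations.
Open Scope R_scope.

(* P(u_i = 1 | H_0) *)
Definition pi10 (alpha P10 P01 Pf : R) : R :=
  alpha * (P10 * (1 - Pf) + (1 - P01) * Pf) + (1 - alpha) * Pf.

(* P(u_i = 1 | H_1) *)
Definition pi11 (alpha P10 P01 Pd : R) : R :=
  alpha * (P10 * (1 - Pd) + (1 - P01) * Pd) + (1 - alpha) * Pd.

Fixpoint lik (p : R) (u : list bool) : R :=
  match u with
  | [] => 1
  | b :: u' => (if b then p else 1 - p) * lik p u'
  end.

Definition num_ones (u : list bool) : nat := length (filter (fun b => b) u).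

Definition MAP_decides_H1 (l1 l0 P0 P1 : R) : Prop := l1 / l0 > P0 / P1.
Definition MAP_decides_H0 (l1 l0 P0 P1 : R) : Prop := l1 / l0 < P0 / P1.

Definition Tprime (N : nat) (P0 P1 p10 p11 : R) : R :=
  ln (P1 / P0 * ((1 - p11) / (1 - p10)) ^ N) /
  (ln (p10 / p11) + ln ((1 - p11) / (1 - p10))).

(** The log-likelihood ratio of [k] ones among [N] i.i.d. Bernoulli
    observations is affine in [k], with slope
    [-(ln (pi10/pi11) + ln ((1-pi11)/(1-pi10)))]. When the Byzantine fraction
    exceeds [1/(P01+P10)] the channel is flipped, [pi11 < pi10], so the slope
    is negative and comparing the likelihood ratio with [P0/P1] amounts to
    comparing [k] with the root [T'] of this affine function. *)

From Stdlib Require Import Reals List Lra.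
Open Scope R_scope.

Lemma pi11_sub_pi10 alpha P10 P01 Pf Pd :
  pi11 alpha P10 P01 Pd - pi10 alpha P10 P01 Pf
  = (Pd - Pf) * (1 - alpha * (P01 + P10)).
Proof. unfold pi11, pi10; ring. Qed.

Lemma pi11_lt_pi10 alpha P10 P01 Pf Pd :
  Pf < Pd -> 0 < P01 + P10 -> alpha > 1 / (P01 + P10) ->
  pi11 alpha P10 P01 Pd < pi10 alpha P10 P01 Pf.
Proof.
  intros hPfd hsum hblind.
  assert (hflip : 1 < alpha * (P01 + P10)).
  { apply (Rmult_lt_compat_r (P01 + P10)) in hblind; [|exact hsum].
    unfold Rdiv in hblind; rewrite Rmult_1_l, Rinv_l in hblind; lra. }
  pose proof (pi11_sub_pi10 alpha P10 P01 Pf Pd) as e.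
  assert ((Pd - Pf) * (1 - alpha * (P01 + P10)) < 0)
    by (apply Rmult_pos_neg; lra).
  lra.
Qed.

Lemma ln_div x y : 0 < x -> 0 < y -> ln (x / y) = ln x - ln y.
Proof. intros hx hy; unfold Rdiv; rewrite ln_mult, ln_Rinv; auto with real. Qed.

Lemma lik_pos p u : 0 < p < 1 -> 0 < lik p u.
Proof.
  intros hp; induction u as [|b u IH]; simpl; [lra|].
  apply Rmult_lt_0_compat; [destruct b; lra | exact IH].
Qed.

Lemma ln_lik p u : 0 < p < 1 ->
  ln (lik p u)
  = INR (num_ones u) * ln p + (INR (length u) - INR (num_ones u)) * ln (1 - p).
Proof.
  intros hp; induction u as [|b u IH]; unfold num_ones in *; cbn [lik filter length].
  - rewrite ln_1; simpl; ring.
  - rewrite ln_mult, IH by (destruct b; lra || apply lik_pos; lra).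
    destruct b; cbn [filter length]; rewrite ?(S_INR (length _)); ring.
Qed.

Section ThresholdTest.

Variables (p q P0 P1 : R).
Hypotheses (hp : 0 < p < 1) (hq : 0 < q < 1) (hP0 : 0 < P0) (hP1 : 0 < P1).

Let slope := ln (p / q) + ln ((1 - q) / (1 - p)).

Lemma ln_lik_ratio_sub_ln_prior u : slope <> 0 ->
  ln (lik q u / lik p u) - ln (P0 / P1)
  = slope * (Tprime (length u) P0 P1 p q - INR (num_ones u)).
Proof.
  intros hslope.
  assert (hr : 0 < (1 - q) / (1 - p)) by (apply Rdiv_lt_0_compat; lra).
  unfold Tprime; fold slope.
  rewrite ln_mult, ln_pow; [| exact hr | apply Rdiv_lt_0_compat; lra | now apply pow_lt].
  rewrite !ln_div, !ln_lik by (lra || apply lik_pos; lra).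
  unfold slope in *; rewrite !ln_div in * by lra.
  field; exact hslope.
Qed.

Hypothesis hqp : q < p.

Lemma slope_pos : 0 < slope.
Proof.
  unfold slope; rewrite !ln_div by lra.
  pose proof (ln_increasing q p ltac:(lra) hqp).
  pose proof (ln_increasing (1 - p) (1 - q) ltac:(lra) ltac:(lra)).
  lra.
Qed.

Lemma lik_ratio_lt_prior_ratio u :
  Tprime (length u) P0 P1 p q < INR (num_ones u) -> lik q u / lik p u < P0 / P1.
Proof.
  intros hk.
  apply ln_lt_inv; [apply Rdiv_lt_0_compat; apply lik_pos; lra
                   | apply Rdiv_lt_0_compat; lra |].
  pose proof slope_pos as hs.
  pose proof (ln_lik_ratio_sub_ln_prior u ltac:(lra)) as e.
  assert (slope * (Tprime (length u) P0 P1 p q - INR (num_ones u)) < 0)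
    by (apply Rmult_pos_neg; lra).
  lra.
Qed.

Lemma lik_ratio_gt_prior_ratio u :
  INR (num_ones u) < Tprime (length u) P0 P1 p q -> lik q u / lik p u > P0 / P1.
Proof.
  intros hk.
  apply ln_lt_inv; [apply Rdiv_lt_0_compat; lra
                   | apply Rdiv_lt_0_compat; apply lik_pos; lra |].
  pose proof slope_pos as hs.
  pose proof (ln_lik_ratio_sub_ln_prior u ltac:(lra)) as e.
  assert (0 < slope * (Tprime (length u) P0 P1 p q - INR (num_ones u)))
    by (apply Rmult_lt_0_compat; lra).
  lra.
Qed.

End ThresholdTest.

Theorem lemma5 (N : nat) (P0 P1 Pd Pf alpha P10 P01 : R)
  (hP0 : 0 < P0 < 1) (hP1 : 0 < P1 < 1) (hP : P0 + P1 = 1)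
  (hPf : 0 < Pf) (hPfd : Pf < Pd) (hPd : Pd < 1)
  (halpha : 0 <= alpha <= 1)
  (hP10 : 0 <= P10 <= 1) (hP01 : 0 <= P01 <= 1)
  (hsum : 0 < P01 + P10)
  (hblind : alpha > 1 / (P01 + P10))
  (hpi10 : 0 < pi10 alpha P10 P01 Pf < 1)
  (hpi11 : 0 < pi11 alpha P10 P01 Pd < 1)
  (u : list bool) (hu : length u = N) :
  let p10 := pi10 alpha P10 P01 Pf in
  let p11 := pi11 alpha P10 P01 Pd in
  let T := Tprime N P0 P1 p10 p11 in
  (INR (num_ones u) > T -> MAP_decides_H0 (lik p11 u) (lik p10 u) P0 P1) /\
  (INR (num_ones u) < T -> MAP_decides_H1 (lik p11 u) (lik p10 u) P0 P1).
Proof.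
  intros p10 p11 T; subst N.
  assert (hflip : p11 < p10) by now apply pi11_lt_pi10.
  split.
  - apply lik_ratio_lt_prior_ratio; tauto || lra.
  - apply lik_ratio_gt_prior_ratio; tauto || lra.
Qed.
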